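(* Let $q>0$, $q\neq1$, and $s\in(0,1)$ with $s^2>1/(1+\sqrt{q})$. For $\eta=(\eta_1,\eta_2)=(\cos\theta_\eta,\sin\theta_\eta)\in\mathbb{S}^1$, let $\mathcal{T}_1\theta_\eta$, $\mathcal{T}_2\theta_\eta$ be the two solutions $\theta_\xi$ (with $\xi=(\xi_1,\xi_2)=(\cos\theta_\xi,\sin\theta_\xi)$) of $$\sqrt{q}\,(\eta_1\xi_2-s^2\eta_2\xi_1)+(1-s^2)\xi_1\xi_2=0,$$ ordered so that $\operatorname{sgn}\cos\theta_\eta=\operatorname{sgn}\cos\mathcal{T}_1\theta_\eta=-\operatorname{sgn}\cos\mathcal{T}_2\theta_\eta$ and $\operatorname{sgn}\sin\theta_\eta=\operatorname{sgn}\sin\mathcal{T}_1\theta_\eta=-\operatorname{sgn}\sin\mathcal{T}_2\theta_\eta$. Then: (a) $\mathcal{T}_j(\theta_\eta+\pi)=\mathcal{T}_j\theta_\eta+\pi$ (mod $2\pi$) for $j=1,2$; (b) for $j=1,2$, with $\xi_1=\cos\mathcal{T}_j\theta_\eta$, $\xi_2=\sin\mathcal{T}_j\theta_\eta$, whenever $\eta_1\eta_2\neq0$, $$\frac{|\eta_1|}{|\xi_1|}-s^2\frac{|\eta_2|}{|\xi_2|}=(-1)^j\frac{1-s^2}{\sqrt{q}};$$ (c) $|\cos\mathcal{T}_2\theta_\eta|<|\cos\mathcal{T}_1\theta_\eta|$ whenever $\eta_1\eta_2\neq0$.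
   Context: Angles are taken modulo $2\pi$. It is a known fact (used as the setting here) that under the condition $s^2>1/(1+\sqrt{q})$ the displayed equation has, for each $\eta\in\mathbb{S}^1$, exactly two solutions $\theta_\xi\in\mathbb{R}/(2\pi\mathbb{Z})$, and they can be ordered as stated; moreover $|\cos\theta_\eta|\le|\cos\mathcal{T}_1\theta_\eta|$, and $|\cos\theta_\eta|\le|\cos\mathcal{T}_2\theta_\eta|\le|\cos\theta_\eta|/s^2$ if $q>1$, $|\cos\theta_\eta|\ge|\cos\mathcal{T}_2\theta_\eta|$ if $0<q<1$, and $\mathcal{T}_1\theta_\eta=\theta_\eta$ iff $\mathcal{T}_2\theta_\eta=\theta_\eta+\pi$ iff $\theta_\eta\in\{0,\pi/2,\pi,3\pi/2\}$. (This arises from stationary points for the ellipse $(x_1/a)^2+(x_2/b)^2<1$, $s=b/a$.) *)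

From Stdlib Require Import Reals.
Open Scope R_scope.

Definition sgn (x : R) : R :=
  if Rlt_dec 0 x then 1 else if Rlt_dec x 0 then -1 else 0.

Definition stat_eq (q s th x : R) : Prop :=
  sqrt q * (cos th * sin x - s ^ 2 * sin th * cos x)
  + (1 - s ^ 2) * cos x * sin x = 0.

(* Angles are taken modulo 2 pi: equality mod 2 pi is equality of the
   corresponding points (cos, sin) of the unit circle. *)
Definition ang_eq (a b : R) : Prop := cos a = cos b /\ sin a = sin b.

Definition is_T_pair (q s : R) (T1 T2 : R -> R) : Prop :=
  forall th : R,
    stat_eq q s th (T1 th) /\ stat_eq q s th (T2 th) /\
    (forall x, stat_eq q s th x -> ang_eq x (T1 th) \/ ang_eq x (T2 th)) /\
    sgn (cos th) = sgn (cos (T1 th)) /\ sgn (cos th) = - sgn (cos (T2 th)) /\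
    sgn (sin th) = sgn (sin (T1 th)) /\ sgn (sin th) = - sgn (sin (T2 th)).

From Stdlib Require Import Reals Lra Psatz.
Open Scope R_scope.

(* Dividing the defining equation by [sqrt q xi1 xi2] gives
   [eta1/xi1 - s^2 eta2/xi2 = -(1 - s^2)/sqrt q]; the sign conditions turn the
   quotients into quotients of absolute values, unchanged for [T1] and negated
   for [T2], which is (b).  The equation is invariant under adding [PI] to both
   angles, which flips every sign, so (a) follows from the uniqueness of the
   solution with prescribed signs.  For (c), on the open quarter circle the
   quantity [|eta1|/|xi1| - s^2 |eta2|/|xi2|] does not increase with [|xi1|],
   while by (b) it is larger at [T2] than at [T1]. *)

Lemma sgn_opp (x : R) : sgn (- x) = - sgn x.
Proof. unfold sgn; repeat destruct Rlt_dec; lra. Qed.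

Lemma sgn_eq_opp_0 (x : R) : sgn x = - sgn x -> x = 0.
Proof. unfold sgn; repeat destruct Rlt_dec; lra. Qed.

Lemma sgn_eq_neq0 (a b : R) : a <> 0 -> sgn a = sgn b \/ sgn a = - sgn b -> b <> 0.
Proof. unfold sgn; repeat destruct Rlt_dec; lra. Qed.

Lemma Rabs_div_sgn_eq (a b : R) : sgn a = sgn b -> Rabs a / Rabs b = a / b.
Proof.
  unfold sgn; repeat destruct Rlt_dec; intros H; try lra.
  - now rewrite !Rabs_right by lra.
  - rewrite !Rabs_left by lra; field; lra.
  - replace a with 0 by lra; replace b with 0 by lra.
    now rewrite Rabs_R0.
Qed.

Lemma Rabs_div_sgn_opp (a b : R) : sgn a = - sgn b -> Rabs a / Rabs b = - (a / b).
Proof.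
  intros H; rewrite <- (Rabs_Ropp b), Rabs_div_sgn_eq by (rewrite sgn_opp; lra).
  now unfold Rdiv; rewrite Rinv_opp, Ropp_mult_distr_r.
Qed.

Lemma ang_eq_sym (a b : R) : ang_eq a b -> ang_eq b a.
Proof. now intros [Ec Es]; split. Qed.

Lemma stat_eq_add_PI (q s th x : R) :
  stat_eq q s th x -> stat_eq q s (th + PI) (x + PI).
Proof. unfold stat_eq; intros E; rewrite !neg_cos, !neg_sin, <- E; ring. Qed.

Lemma stat_eq_ratio (q s th x : R) : 0 < q -> cos x <> 0 -> sin x <> 0 ->
  stat_eq q s th x ->
  cos th / cos x - s ^ 2 * (sin th / sin x) = - ((1 - s ^ 2) / sqrt q).
Proof.
  unfold stat_eq; intros Hq Hc Hs E.
  assert (Hk : sqrt q <> 0) by (apply Rgt_not_eq, sqrt_lt_R0; lra).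
  apply (Rmult_eq_reg_r (sqrt q * cos x * sin x));
    [| now repeat apply Rmult_integral_contrapositive_currified].
  replace (- ((1 - s ^ 2) / sqrt q) * (sqrt q * cos x * sin x))
    with (sqrt q * (cos th * sin x - s ^ 2 * sin th * cos x)
          - (sqrt q * (cos th * sin x - s ^ 2 * sin th * cos x)
             + (1 - s ^ 2) * cos x * sin x)) by (field; exact Hk).
  rewrite E; field; auto.
Qed.

Lemma abs_cos_sin_ratio_antitone (a b k x y : R) :
  0 <= a -> 0 <= b -> 0 <= k ->
  cos x <> 0 -> sin x <> 0 -> cos y <> 0 -> sin y <> 0 ->
  Rabs (cos x) <= Rabs (cos y) ->
  a / Rabs (cos y) - k * (b / Rabs (sin y)) <= a / Rabs (cos x) - k * (b / Rabs (sin x)).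
Proof.
  intros Ha Hb Hk Hcx Hsx Hcy Hsy Hle.
  pose proof (Rabs_pos_lt _ Hcx); pose proof (Rabs_pos_lt _ Hsx).
  pose proof (Rabs_pos_lt _ Hsy).
  assert (Hsin : Rabs (sin y) <= Rabs (sin x)).
  { assert (Hsq : forall z, Rabs (cos z) ^ 2 + Rabs (sin z) ^ 2 = 1).
    { intros z; rewrite !pow2_abs; pose proof (sin2_cos2 z); unfold Rsqr in *; lra. }
    pose proof (Hsq x); pose proof (Hsq y); nra. }
  unfold Rdiv; apply Rplus_le_compat; [| apply Ropp_le_contravar, Rmult_le_compat_l; auto];
    apply Rmult_le_compat_l; auto; apply Rinv_le_contravar; lra.
Qed.

Section TPair.

Variables (q s : R) (T1 T2 : R -> R).
Hypothesis HT : is_T_pair q s T1 T2.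

Lemma T1_unique (th x : R) : stat_eq q s th x ->
  sgn (cos x) = sgn (cos th) -> sgn (sin x) = sgn (sin th) -> ang_eq x (T1 th).
Proof.
  intros Hx Hc Hs; destruct (HT th) as (_ & _ & Hsol & _ & S2 & _ & S4).
  destruct (Hsol x Hx) as [H | [Ec Es]]; [exact H | exfalso].
  rewrite Ec in Hc; rewrite Es in Hs.
  apply (cos_sin_0 th); split; apply sgn_eq_opp_0; lra.
Qed.

Lemma T2_unique (th x : R) : stat_eq q s th x ->
  sgn (cos x) = - sgn (cos th) -> sgn (sin x) = - sgn (sin th) -> ang_eq x (T2 th).
Proof.
  intros Hx Hc Hs; destruct (HT th) as (_ & _ & Hsol & S1 & _ & S3 & _).
  destruct (Hsol x Hx) as [[Ec Es] | H]; [exfalso | exact H].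
  rewrite Ec in Hc; rewrite Es in Hs.
  apply (cos_sin_0 th); split; apply sgn_eq_opp_0; lra.
Qed.

Lemma T1_add_PI (th : R) : ang_eq (T1 (th + PI)) (T1 th + PI).
Proof.
  destruct (HT th) as (E1 & _ & _ & S1 & _ & S3 & _).
  apply ang_eq_sym, T1_unique; [now apply stat_eq_add_PI | |];
    rewrite ?neg_cos, ?neg_sin, !sgn_opp; lra.
Qed.

Lemma T2_add_PI (th : R) : ang_eq (T2 (th + PI)) (T2 th + PI).
Proof.
  destruct (HT th) as (_ & E2 & _ & _ & S2 & _ & S4).
  apply ang_eq_sym, T2_unique; [now apply stat_eq_add_PI | |];
    rewrite ?neg_cos, ?neg_sin, !sgn_opp; lra.
Qed.

Lemma T_cos_sin_neq0 (th : R) : cos th * sin th <> 0 ->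
  cos (T1 th) <> 0 /\ sin (T1 th) <> 0 /\ cos (T2 th) <> 0 /\ sin (T2 th) <> 0.
Proof.
  intros H; destruct (HT th) as (_ & _ & _ & S1 & S2 & S3 & S4).
  assert (Hc : cos th <> 0) by (intros E; apply H; rewrite E; ring).
  assert (Hs : sin th <> 0) by (intros E; apply H; rewrite E; ring).
  repeat split; [apply (sgn_eq_neq0 (cos th)) | apply (sgn_eq_neq0 (sin th))
                | apply (sgn_eq_neq0 (cos th)) | apply (sgn_eq_neq0 (sin th))]; auto.
Qed.

Hypothesis Hq : 0 < q.

Lemma T1_abs_ratio (th : R) : cos th * sin th <> 0 ->
  Rabs (cos th) / Rabs (cos (T1 th)) - s ^ 2 * (Rabs (sin th) / Rabs (sin (T1 th)))
    = - ((1 - s ^ 2) / sqrt q).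
Proof.
  intros H; destruct (T_cos_sin_neq0 th H) as (Hc & Hs & _).
  destruct (HT th) as (E1 & _ & _ & S1 & _ & S3 & _).
  rewrite !Rabs_div_sgn_eq by assumption.
  now apply stat_eq_ratio.
Qed.

Lemma T2_abs_ratio (th : R) : cos th * sin th <> 0 ->
  Rabs (cos th) / Rabs (cos (T2 th)) - s ^ 2 * (Rabs (sin th) / Rabs (sin (T2 th)))
    = (1 - s ^ 2) / sqrt q.
Proof.
  intros H; destruct (T_cos_sin_neq0 th H) as (_ & _ & Hc & Hs).
  destruct (HT th) as (_ & E2 & _ & _ & S2 & _ & S4).
  rewrite !Rabs_div_sgn_opp by assumption.
  pose proof (stat_eq_ratio q s th (T2 th) Hq Hc Hs E2); lra.
Qed.

Hypotheses (Hs0 : 0 < s) (Hs1 : s < 1).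

Lemma abs_cos_T2_lt_T1 (th : R) : cos th * sin th <> 0 ->
  Rabs (cos (T2 th)) < Rabs (cos (T1 th)).
Proof.
  intros H; destruct (T_cos_sin_neq0 th H) as (Hc1 & Hsn1 & Hc2 & Hsn2).
  pose proof (T1_abs_ratio th H); pose proof (T2_abs_ratio th H).
  assert (Ha : 0 < (1 - s ^ 2) / sqrt q)
    by (apply Rdiv_lt_0_compat; [nra | apply sqrt_lt_R0; lra]).
  apply Rnot_le_lt; intros Hle.
  pose proof (abs_cos_sin_ratio_antitone (Rabs (cos th)) (Rabs (sin th)) (s ^ 2)
    (T1 th) (T2 th) (Rabs_pos _) (Rabs_pos _) (pow2_ge_0 s) Hc1 Hsn1 Hc2 Hsn2 Hle).
  lra.
Qed.

End TPair.

Theorem corollary1 (q s : R) (T1 T2 : R -> R) :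
  0 < q -> q <> 1 -> 0 < s -> s < 1 ->
  s ^ 2 > 1 / (1 + sqrt q) ->
  is_T_pair q s T1 T2 ->
  (* (a) *)
  (forall th, ang_eq (T1 (th + PI)) (T1 th + PI) /\
              ang_eq (T2 (th + PI)) (T2 th + PI)) /\
  (* (b) *)
  (forall th, cos th * sin th <> 0 ->
     Rabs (cos th) / Rabs (cos (T1 th)) - s ^ 2 * (Rabs (sin th) / Rabs (sin (T1 th)))
       = - ((1 - s ^ 2) / sqrt q) /\
     Rabs (cos th) / Rabs (cos (T2 th)) - s ^ 2 * (Rabs (sin th) / Rabs (sin (T2 th)))
       = (1 - s ^ 2) / sqrt q) /\
  (* (c) *)
  (forall th, cos th * sin th <> 0 ->
     Rabs (cos (T2 th)) < Rabs (cos (T1 th))).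
Proof.
  (* [q <> 1] and [s^2 > 1/(1 + sqrt q)] only guarantee that the pair exists. *)
  intros Hq _ Hs0 Hs1 _ HT.
  split; [| split].
  - intros th; split; [exact (T1_add_PI q s T1 T2 HT th)
                      | exact (T2_add_PI q s T1 T2 HT th)].
  - intros th H; split; [exact (T1_abs_ratio q s T1 T2 HT Hq th H)
                        | exact (T2_abs_ratio q s T1 T2 HT Hq th H)].
  - exact (abs_cos_T2_lt_T1 q s T1 T2 HT Hq Hs0 Hs1).
Qed.
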